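(* Let $n>1$ be square-free and let $r,t\in\mathbb{Z}$ with $\gcd(r,n)=1$. Then \[\mathsf{c}(V_n,a_{n,r,t})=\sum_{(d,\ell)}\frac{d}{\kappa(n,r,t)}\,\phi\!\left(\frac{|r|_n}{\ell\,\gcd\left(\kappa(d,r,t),|r|_n\right)}\right),\] where the sum runs over all pairs of positive integers $(d,\ell)$ such that $d\mid n$, $\ell$ divides $\dfrac{|r|_n}{\gcd\left(\kappa(d,r,t),|r|_n\right)}$, and $\gcd\left(r^{\ell\kappa(d,r,t)}-1,\,n\right)=d$.
   Context: $\mathrm{D}_{2n}=\langle u_n,v_n\mid u_n^n=1=v_n^2,\ v_nu_nv_n=u_n^{-1}\rangle$. For integers $r,t$ with $\gcd(r,n)=1$, $a_{n,r,t}$ is the automorphism of $\mathrm{D}_{2n}$ with $u_n^i\mapsto u_n^{ri}$, $u_n^jv_n\mapsto u_n^{rj+t}v_n$. $V_n:=\{u_n^iv_n: 0\leq i\leq n-1\}$, and $\mathsf{c}(V_n,a)$ is the number of cycles (including fixed points) of the permutation induced by $a$ on $V_n$. For $m\geq1$ with $\gcd(r,m)=1$, $|r|_m$ is the multiplicative order of $r$ mod $m$ (so $|r|_1=1$). $S_k(x):=1+x+\cdots+x^{k-1}$ ($S_0=0$), and $\kappa(m,r,t):=\dfrac{m\,|r|_m}{\gcd\left(m,\ t\,S_{|r|_m}(r)\right)}$. $\phi$ is Euler's function. *)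

From mathcomp Require Import all_boot all_order all_algebra.
Set Implicit Arguments. Unset Strict Implicit. Unset Printing Implicit Defensive.
Import Order.TTheory GRing.Theory Num.Theory.

Definition squarefree (n : nat) : Prop :=
  forall p : nat, prime p -> ~~ (p ^ 2 %| n).

(* V_n = {u_n^i v_n : 0 <= i < n} is indexed by i : 'I_n (i <-> u_n^i v_n).
   The automorphism a_{n,r,t} maps u_n^j v_n to u_n^{rj+t} v_n, i.e. the
   index j to (r*j + t) mod n.  (insubd j is only a default for the
   impossible case n = 0.) *)
Definition aV (n : nat) (r t : int) (j : 'I_n) : 'I_n :=
  insubd j (absz (((r * (j : nat)%:Z + t)%R) %% (n%:Z))%Z).

Definition cV (n : nat) (r t : int) : nat := fcard (@aV n r t) predT.

(* |r|_m : multiplicative order of r modulo m (m >= 1, gcd(r,m)=1), i.e. the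
   least k > 0 with m | r^k - 1.  Such k exists with k <= m, so it is found
   by a search over 0..m; in particular |r|_1 = 1. *)
Definition mord (m : nat) (r : int) : nat :=
  find (fun k => (0 < k)%N && ((m%:Z %| (r ^+ k - 1)%R)%Z)) (iota 0 m.+1).

Definition Ssum (k : nat) (x : int) : int := (\sum_(i < k) x ^+ i)%R.

Definition kappa (m : nat) (r t : int) : nat :=
  (m * mord m r) %/ gcdn m `|(t * Ssum (mord m r) r)%R|.

From mathcomp Require Import all_boot all_order all_algebra.
From mathcomp Require Import zify ring.
From mathcomp Require Import cyclic.
Import Order.TTheory GRing.Theory Num.Theory.
Set Implicit Arguments. Unset Strict Implicit. Unset Printing Implicit Defensive.

(* Write a for a_{n,r,t} and K = kappa(n,r,t).  The k-th iterate of a sends the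
   index j to r^k j + t S_k(r) mod n, so a^K = id and, counting the cycles of the
   cyclic group generated by a by the Cauchy-Frobenius lemma,
   K c(V_n,a) = sum_{k<K} #Fix(a^k).  Fixed points of a^k solve a linear
   congruence: there are d = gcd(r^k - 1, n) of them if d | t S_k(r), which
   amounts to kappa(d) | k, and none otherwise.  Grouping the k by d and writing
   k = j kappa(d), the value gcd(r^k - 1, n) only depends on l = gcd(j, M) with
   M = |r|_n / gcd(kappa(d), |r|_n), and there are phi(M/l) such j below M.
   This needs K = kappa(d) M whenever d occurs, i.e. K = lcm(kappa(d), |r|_n),
   which is where square-freeness of n enters. *)

Lemma sum_nat_mul_blocks (M c : nat) (F : nat -> nat) :
  \sum_(0 <= k < M * c) F k = \sum_(0 <= j < M) \sum_(0 <= i < c) F (j * c + i).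
Proof.
rewrite big_nat_mul; apply: eq_bigr => j _.
by rewrite mulSn addnC -{1}[j * c]add0n big_addn addKn; apply: eq_bigr => i _; rewrite addnC.
Qed.

Lemma sum_nat_dvdn (M c : nat) (F : nat -> nat) : 0 < c ->
  \sum_(0 <= k < M * c | c %| k) F k = \sum_(0 <= j < M) F (j * c).
Proof.
move=> c_gt0; rewrite big_mkcond sum_nat_mul_blocks; apply: eq_bigr => j _.
rewrite big_ltn // addn0 dvdn_mull //= big1_seq ?addn0 // => i.
rewrite mem_iota /= dvdn_addr ?dvdn_mull // => /andP[i_gt0 i_lt].
by rewrite gtnNdvd //; lia.
Qed.

Lemma sum_nat_modn_eq (M c i : nat) : i < c ->
  \sum_(0 <= k < M * c) (k %% c == i) = M.
Proof.
move=> lt_ic; rewrite sum_nat_mul_blocks -[RHS]muln1 -{2}[M]subn0 -sum_nat_const_nat.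
apply: eq_bigr => j _; under eq_bigr => k _ do rewrite modnMDl.
rewrite (bigD1_seq i) ?mem_iota ?iota_uniq ?subn0 //= modn_small // eqxx.
rewrite big1_seq // => k /andP[ki]; rewrite mem_iota subn0 => /andP[_ kc].
by rewrite modn_small // (negbTE ki).
Qed.

Lemma sum_gcdn_eq_totient (M l : nat) : 0 < M -> l %| M ->
  \sum_(0 <= j < M) (gcdn j M == l) = totient (M %/ l).
Proof.
move=> M_gt0 lM; have l_gt0 : 0 < l by apply: dvdn_gt0 lM.
rewrite -{1 2}(divnK lM); set M' := M %/ l.
transitivity (\sum_(0 <= j < M' * l | l %| j) (gcdn j (M' * l) == l)).
  rewrite [RHS]big_mkcond; apply: eq_bigr => j _; case: ifPn => // ljN.
  by apply/eqP; rewrite eqb0; apply: contra ljN => /eqP <-; apply: dvdn_gcdl.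
rewrite sum_nat_dvdn // totient_count_coprime; apply: eq_bigr => i _.
by rewrite -muln_gcdl -{2}[l]mul1n eqn_pmul2r // coprime_sym.
Qed.

Section PeriodicMap.
Variables (T : finType) (f : T -> T) (N : nat).
Hypotheses (N_gt0 : 0 < N) (iter_fN : forall x, iter N f x = x).

Lemma periodic_inj : injective f.
Proof.
move=> x y fxy; rewrite -(iter_fN x) -(iter_fN y).
by case: N N_gt0 => // N' _; rewrite !iterSr fxy.
Qed.

Lemma iter_fix_order x k : (iter k f x == x) = (order f x %| k).
Proof.
have iter_order_mul q : iter (q * order f x) f x = x.
  by elim: q => // q IHq; rewrite mulSn iterD IHq (iter_order periodic_inj).
rewrite {1}(divn_eq k (order f x)) addnC iterD iter_order_mul /dvdn.
apply/eqP/eqP => [fix_k | ->] //.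
by rewrite -(findex_iter (ltn_pmod k (order_gt0 f x))) fix_k findex0.
Qed.

Lemma order_dvdn_period x : order f x %| N.
Proof. by rewrite -iter_fix_order iter_fN. Qed.

Lemma sum_iter_fix x : \sum_(0 <= k < N) (iter k f x == x) = N %/ order f x.
Proof.
rewrite -{1}(divnK (order_dvdn_period x)).
transitivity (\sum_(0 <= k < N %/ order f x * order f x | order f x %| k) 1).
  by rewrite [RHS]big_mkcond; apply: eq_bigr => k _; rewrite iter_fix_order; case: ifP.
by rewrite sum_nat_dvdn ?order_gt0 // sum_nat_const_nat subn0 muln1.
Qed.

Let fconnect_symf : connect_sym (frel f) := fconnect_sym periodic_inj.

Lemma order_froot x : order f (froot f x) = order f x.
Proof.
apply: eq_card => y; rewrite !inE.
by apply: (same_connect fconnect_symf); rewrite fconnect_symf connect_root.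
Qed.

Theorem burnside_periodic :
  \sum_(0 <= k < N) \sum_x (iter k f x == x) = N * fcard f predT.
Proof.
rewrite exchange_big /=; under eq_bigr => x _ do rewrite sum_iter_fix.
rewrite (partition_big (froot f) (froots f)) /=; last first.
  by move=> x _; apply: (roots_root fconnect_symf).
transitivity (\sum_(y | froots f y) N); last first.
  by rewrite sum_nat_const mulnC; congr (_ * _); apply: eq_card => x; rewrite !inE andbT.
apply: eq_bigr => y /eqP rooty.
transitivity (\sum_(x | froot f x == y) N %/ order f y).
  by apply: eq_bigr => x /eqP <-; rewrite order_froot.
rewrite sum_nat_const.
have -> : #|[pred x | froot f x == y]| = order f y.
  apply: eq_card => x; rewrite !inE -{1}rooty.
  by rewrite (root_connect fconnect_symf) fconnect_symf.
by rewrite mulnC divnK // order_dvdn_period.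
Qed.

End PeriodicMap.

Section GeometricSums.
Local Open Scope ring_scope.
Implicit Types (x y : int) (k q : nat).

Lemma Ssum0 x : Ssum 0 x = 0.
Proof. by rewrite /Ssum big_ord0. Qed.

Lemma SsumS k x : Ssum k.+1 x = 1 + x * Ssum k x.
Proof.
rewrite /Ssum big_ord_recl expr0 mulr_sumr; congr (_ + _).
by apply: eq_bigr => i _; rewrite exprS.
Qed.

Lemma SsumSr k x : Ssum k.+1 x = Ssum k x + x ^+ k.
Proof. by rewrite /Ssum big_ord_recr. Qed.

Lemma Ssum_geom k x : (x - 1) * Ssum k x = x ^+ k - 1.
Proof.
elim: k => [|k IHk]; first by rewrite Ssum0 mulr0 expr0 subrr.
by rewrite SsumSr mulrDr IHk exprS; ring.
Qed.

Lemma SsumD a b x : Ssum (a + b) x = Ssum a x + x ^+ a * Ssum b x.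
Proof.
elim: b => [|b IHb]; first by rewrite addn0 Ssum0 mulr0 addr0.
by rewrite addnS !SsumSr IHb exprD; ring.
Qed.

Lemma SsumM a q x : Ssum (a * q) x = Ssum a x * Ssum q (x ^+ a).
Proof.
elim: q => [|q IHq]; first by rewrite muln0 !Ssum0 mulr0.
by rewrite mulnS SsumD IHq SsumS; ring.
Qed.

Lemma Ssum_mod_sub1 q y : (Ssum q y = q%:Z %[mod y - 1])%Z.
Proof.
apply/eqP; rewrite eqz_mod_dvd; elim: q => [|q IHq]; first by rewrite Ssum0 subr0.
have -> : Ssum q.+1 y - q.+1%:Z = (Ssum q y - q%:Z) + (y ^+ q - 1).
  by rewrite SsumSr -addn1 PoszD; ring.
by rewrite rpredD // -Ssum_geom dvdz_mulr.
Qed.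

Lemma dvdz_expM_sub1 y a q : (y ^+ a - 1 %| y ^+ (a * q) - 1)%Z.
Proof. by rewrite exprM -Ssum_geom dvdz_mulr. Qed.

End GeometricSums.

Lemma leq_totient n : totient n <= n.
Proof.
rewrite totient_count_coprime.
apply: (@leq_trans (\sum_(0 <= i < n) 1)); last by rewrite sum_nat_const_nat subn0 muln1.
by apply: leq_sum => i _; apply: leq_b1.
Qed.

Section MultiplicativeOrder.
Local Open Scope ring_scope.

Lemma dvdz_exp_totient_sub1 (d : nat) (r : int) : (0 < d)%N -> coprime `|r| d ->
  (d%:Z %| r ^+ totient d - 1)%Z.
Proof.
move=> d_gt0 co_rd.
have rd_ge0 : (0 <= r %% d%:Z)%Z by rewrite modz_ge0 // -lt0n.
set a := `|(r %% d%:Z)%Z|%N.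
have aE : a%:Z = (r %% d%:Z)%Z by rewrite /a gez0_abs.
have co_ad : coprime a d.
  by have := gcdz_modl r d%:Z; rewrite /gcdz /coprime => -[gcd_ad]; rewrite /a gcd_ad.
rewrite -eqz_mod_dvd -modzXm -aE -natz -natrX natz modz_nat.
by rewrite (Euler_exp_totient co_ad) -modz_nat.
Qed.

Section Mord.
Variables (d : nat) (r : int).
Hypotheses (d_gt0 : (0 < d)%N) (co_rd : coprime `|r| d).

Let mord_cond k := (0 < k)%N && (d%:Z %| r ^+ k - 1)%Z.

Let has_mord_cond : has mord_cond (iota 0 d.+1).
Proof.
apply/hasP; exists (totient d); first by rewrite mem_iota add0n ltnS leq_totient.
by rewrite /mord_cond totient_gt0 d_gt0 dvdz_exp_totient_sub1.
Qed.

Let mord_ltS : (mord d r < d.+1)%N.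
Proof. by have := has_mord_cond; rewrite has_find size_iota. Qed.

Let mord_condP : mord_cond (mord d r).
Proof. by have := nth_find 0 has_mord_cond; rewrite nth_iota // mord_ltS. Qed.

Lemma mord_gt0 : (0 < mord d r)%N.
Proof. by case/andP: mord_condP. Qed.

Lemma dvdz_exp_mord_sub1 : (d%:Z %| r ^+ mord d r - 1)%Z.
Proof. by case/andP: mord_condP. Qed.

Let mord_min k : (0 < k < mord d r)%N -> ~~ (d%:Z %| r ^+ k - 1)%Z.
Proof.
case/andP=> k_gt0 k_lt; have := before_find 0 k_lt.
by rewrite nth_iota ?add0n ?(ltn_trans k_lt) // /mord_cond k_gt0 /= => ->.
Qed.

Lemma mord_dvdn k : (mord d r %| k)%N = (d%:Z %| r ^+ k - 1)%Z.
Proof.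
set o := mord d r; have o_gt0 : (0 < o)%N := mord_gt0.
rewrite {2}(divn_eq k o) exprD.
have -> : r ^+ (k %/ o * o) * r ^+ (k %% o) - 1 =
   (r ^+ (o * (k %/ o)) - 1) * r ^+ (k %% o) + (r ^+ (k %% o) - 1).
  by rewrite mulnC; ring.
rewrite rpredDl; last first.
  by apply/dvdz_mulr/(dvdz_trans dvdz_exp_mord_sub1)/dvdz_expM_sub1.
rewrite /dvdn; have [-> | rem_gt0] := posnP (k %% o).
  by rewrite expr0 subrr dvdz0.
by apply/esym/negbTE/mord_min; rewrite rem_gt0 ltn_pmod.
Qed.

End Mord.

Lemma mord_dvd (d n : nat) (r : int) : (0 < n)%N -> coprime `|r| n -> (d %| n)%N ->
  (mord d r %| mord n r)%N.
Proof.
move=> n_gt0 co_rn dn; have d_gt0 := dvdn_gt0 n_gt0 dn.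
rewrite mord_dvdn ?(coprime_dvdr dn) //.
by apply: dvdz_trans (dvdz_exp_mord_sub1 n_gt0 co_rn); rewrite dvdzE.
Qed.

End MultiplicativeOrder.

Lemma coprime_div_gcdn d c : 0 < d -> coprime (d %/ gcdn d c) (c %/ gcdn d c).
Proof.
move=> d_gt0; have g_gt0 : 0 < gcdn d c by rewrite gcdn_gt0 d_gt0.
rewrite /coprime -(eqn_pmul2r g_gt0) muln_gcdl !divnK ?dvdn_gcdl ?dvdn_gcdr //.
by rewrite mul1n.
Qed.

Lemma dvdn_mul_divgcd d c q : 0 < d -> (d %| c * q) = (d %/ gcdn d c %| q).
Proof.
move=> d_gt0; have g_gt0 : 0 < gcdn d c by rewrite gcdn_gt0 d_gt0.
have co := coprime_div_gcdn c d_gt0.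
have /esym dE := divnK (dvdn_gcdl d c); have /esym cE := divnK (dvdn_gcdr d c).
set g := gcdn d c in g_gt0 co dE cE *.
by rewrite {1}dE {1}cE mulnAC dvdn_pmul2r // Gauss_dvdr.
Qed.

Lemma gcdn_mul_divgcd k m j : 0 < m ->
  gcdn (j * k) m = gcdn j (m %/ gcdn k m) * gcdn k m.
Proof.
move=> m_gt0; have co : coprime (m %/ gcdn k m) (k %/ gcdn k m).
  by rewrite [gcdn k m]gcdnC coprime_div_gcdn.
have /esym kE := divnK (dvdn_gcdl k m); have /esym mE := divnK (dvdn_gcdr k m).
set g := gcdn k m in co kE mE *.
by rewrite {1}kE {1}mE mulnA -muln_gcdl [gcdn (j * _) _]gcdnC Gauss_gcdl // gcdnC.
Qed.

Lemma lcmn_div_gcd k m : 0 < m -> lcmn k m = k * (m %/ gcdn k m).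
Proof. by move=> m_gt0; rewrite /lcmn muln_divA // dvdn_gcdr. Qed.

Lemma squarefree_coprime_div n d : 0 < n -> squarefree n -> d %| n -> coprime d (n %/ d).
Proof.
move=> n_gt0 sqf_n dn; have d_gt0 := dvdn_gt0 n_gt0 dn.
apply/contraT => not_co.
have g_gt1 : 1 < gcdn d (n %/ d) by rewrite ltn_neqAle eq_sym not_co gcdn_gt0 d_gt0.
have p_prime := pdiv_prime g_gt1; have pg := pdiv_dvd (gcdn d (n %/ d)).
set p := pdiv _ in p_prime pg; case/negP: (sqf_n _ p_prime).
rewrite -(divnK dn) expnS expn1 mulnC dvdn_mul //.
  exact: dvdn_trans pg (dvdn_gcdl _ _).
exact: dvdn_trans pg (dvdn_gcdr _ _).
Qed.

Section Kappa.
Local Open Scope ring_scope.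
Variables (r t : int).

Lemma kappaE d : kappa d r t = (mord d r * (d %/ gcdn d `|(t * Ssum (mord d r) r)%R|))%N.
Proof. by rewrite /kappa mulnC muln_divA ?dvdn_gcdl. Qed.

Lemma kappa_gt0 d : (0 < d)%N -> coprime `|r| d -> (0 < kappa d r t)%N.
Proof.
move=> d_gt0 co_rd; rewrite kappaE muln_gt0 mord_gt0 //=.
by rewrite divn_gt0 ?gcdn_gt0 ?d_gt0 // dvdn_leq ?dvdn_gcdl.
Qed.

(* [d | t S_k(r)] reduces to [d | t S_o(r) (k/o)] once [o = |r|_d] divides [k],
   because [S_k(r) = S_o(r) S_{k/o}(r^o)] and [S_q(r^o) = q] modulo [r^o - 1]. *)
Lemma kappa_dvdn d k : (0 < d)%N -> coprime `|r| d ->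
  (kappa d r t %| k)%N = (d%:Z %| r ^+ k - 1)%Z && (d%:Z %| t * Ssum k r)%Z.
Proof.
move=> d_gt0 co_rd; rewrite -mord_dvdn // kappaE.
set o := mord d r; set c := t * Ssum o r; have o_gt0 : (0 < o)%N by apply: mord_gt0.
have [ok | okN] /= := boolP (o %| k)%N; last first.
  by apply/negbTE; apply: contra okN; apply: dvdn_trans; apply: dvdn_mulr.
rewrite -(divnK ok) [(_ * o)%N]mulnC dvdn_pmul2l // SsumM mulrA -/c -dvdn_mul_divgcd //.
set q := (k %/ o)%N.
have -> : c * Ssum q (r ^+ o) = c * q%:Z + c * (Ssum q (r ^+ o) - q%:Z) by ring.
rewrite rpredDr; first by rewrite dvdzE abszM.
apply/dvdz_mull/(dvdz_trans (dvdz_exp_mord_sub1 d_gt0 co_rd)).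
by rewrite -eqz_mod_dvd; apply/eqP/Ssum_mod_sub1.
Qed.

Lemma mord_dvdn_kappa d : (mord d r %| kappa d r t)%N.
Proof. by rewrite kappaE dvdn_mulr. Qed.

Lemma dvdn_kappa d n : (0 < n)%N -> coprime `|r| n -> (d %| n)%N ->
  (kappa d r t %| kappa n r t)%N.
Proof.
move=> n_gt0 co_rn dn; have d_gt0 := dvdn_gt0 n_gt0 dn.
have /andP[n_pow n_sum] : (n%:Z %| r ^+ kappa n r t - 1)%Z && (n%:Z %| t * Ssum (kappa n r t) r)%Z.
  by rewrite -kappa_dvdn.
rewrite kappa_dvdn ?(coprime_dvdr dn) //.
by rewrite (dvdz_trans _ n_pow) ?(dvdz_trans _ n_sum) // dvdzE.
Qed.

End Kappa.

Section AffineCongruence.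
Local Open Scope ring_scope.

Lemma sum_dvdz_affine (n : nat) (a b : int) : (0 < n)%N ->
  (\sum_(0 <= x < n) ((n%:Z %| (a * x%:Z + b)%R)%Z : nat))%N =
  (if gcdn `|a| n %| `|b| then gcdn `|a| n else 0)%N.
Proof.
move=> n_gt0; set g := gcdn `|a| n.
have g_gt0 : (0 < g)%N by rewrite gcdn_gt0 n_gt0 orbT.
have gn : (g %| n)%N by rewrite dvdn_gcdr.
have [gb | gbN] := boolP (g %| `|b|)%N; last first.
  rewrite big1_seq // => x _; apply/eqP; rewrite eqb0; apply: contra gbN => n_ax_b.
  have : (g%:Z %| a * x%:Z + b)%Z by apply: dvdz_trans n_ax_b; rewrite dvdzE.
  by rewrite rpredDl // dvdz_mulr // dvdzE dvdn_gcdl.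
set a' := (a %/ g%:Z)%Z; set b' := (b %/ g%:Z)%Z; set n' := (n %/ g)%N.
have aE : a = a' * g%:Z by rewrite divzK // dvdzE dvdn_gcdl.
have bE : b = b' * g%:Z by rewrite divzK.
have nE : n = (n' * g)%N by rewrite divnK.
have n'_gt0 : (0 < n')%N by rewrite divn_gt0 // dvdn_leq.
have co_a'n' : gcdn `|a'| n' = 1%N.
  have absaE : `|a|%N = (`|a'| * g)%N by rewrite {1}aE abszM.
  by apply/eqP; rewrite -(eqn_pmul2r g_gt0) muln_gcdl mul1n -nE -absaE.
have [u [v uv]] := Bezoutz a' n'%:Z; rewrite /gcdz /= co_a'n' in uv.
have {}uv : u * a' + v * n'%:Z = 1 by rewrite uv.
(* [c] is the unique solution of [a' x + b' = 0] modulo [n'], since [u] inverts [a']. *)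
set c := - (u * b').
have solE x : (n%:Z %| a * x%:Z + b)%Z = ((x %% n')%N == `|(c %% n'%:Z)%Z|%N).
  have -> : n%:Z = n'%:Z * g%:Z by rewrite {1}nE PoszM.
  have -> : a * x%:Z + b = (a' * x%:Z + b') * g%:Z by rewrite {1}aE {1}bE; ring.
  rewrite dvdz_mul2r ?pnatr_eq0 -?lt0n //.
  have -> : (n'%:Z %| a' * x%:Z + b')%Z = (n'%:Z %| x%:Z - c)%Z.
    apply/idP/idP => dvd_n'.
      have -> : x%:Z - c = u * (a' * x%:Z + b') + x%:Z * v * n'%:Z.
        by rewrite /c -[x%:Z in LHS]mulr1 -uv; ring.
      by rewrite rpredD // dvdz_mull.
    have -> : a' * x%:Z + b' = a' * (x%:Z - c) + b' * v * n'%:Z.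
      by rewrite /c -[b' in LHS]mulr1 -uv; ring.
    by rewrite rpredD // dvdz_mull.
  by rewrite -eqz_mod_dvd modz_nat -eqz_nat gez0_abs // modz_ge0 // -lt0n.
under eq_bigr => x _ do rewrite solE.
by rewrite nE mulnC sum_nat_modn_eq // -ltz_nat gez0_abs ?ltz_pmod ?modz_ge0 // -?lt0n.
Qed.

End AffineCongruence.

Section ReflectionAction.
Local Open Scope ring_scope.
Variables (n : nat) (r t : int).
Hypothesis n_gt0 : (0 < n)%N.

Let modz_n_ge0 z : 0 <= (z %% n%:Z)%Z.
Proof. by rewrite modz_ge0 // -lt0n. Qed.

Lemma aV_val (j : 'I_n) : (aV r t j : nat)%:Z = ((r * j%:Z + t) %% n%:Z)%Z.
Proof.
have lt_n : (`|((r * j%:Z + t) %% n%:Z)%Z| < n)%N.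
  by rewrite -ltz_nat gez0_abs ?modz_n_ge0 // ltz_pmod.
by rewrite /aV val_insubd lt_n gez0_abs ?modz_n_ge0.
Qed.

Lemma iter_aV_val k (j : 'I_n) :
  (iter k (aV r t) j : nat)%:Z = ((r ^+ k * j%:Z + t * Ssum k r) %% n%:Z)%Z.
Proof.
elim: k => [|k IHk].
  by rewrite /= expr0 mul1r Ssum0 mulr0 addr0 modz_small // ltz_nat ltn_ord.
rewrite iterS aV_val IHk -modzDml modzMmr modzDml SsumS exprS.
by congr (_ %% _)%Z; ring.
Qed.

Lemma iter_aV_fix k (j : 'I_n) :
  (iter k (aV r t) j == j) = (n%:Z %| (r ^+ k - 1) * j%:Z + t * Ssum k r)%Z.
Proof.
have j_mod : j%:Z = (j%:Z %% n%:Z)%Z by rewrite modz_small // ltz_nat ltn_ord.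
rewrite -(inj_eq val_inj) /= -eqz_nat iter_aV_val j_mod eqz_mod_dvd -j_mod.
by congr (_ %| _)%Z; ring.
Qed.

End ReflectionAction.

Section CycleCount.
Local Open Scope ring_scope.
Variables (n : nat) (r t : int).
Hypotheses (n_gt1 : (1 < n)%N) (sqf_n : squarefree n) (co_rn : coprime `|r| n).

Let n_gt0 : (0 < n)%N := ltnW n_gt1.
Let co_r_div d : (d %| n)%N -> coprime `|r| d := fun dn => coprime_dvdr dn co_rn.
Let m_gt0 : (0 < mord n r)%N := mord_gt0 n_gt0 co_rn.
Let kappa_n_gt0 : (0 < kappa n r t)%N := kappa_gt0 t n_gt0 co_rn.

Definition gcd_pow_sub1 (e : nat) : nat := gcdn `|r ^+ e - 1| n.

Lemma gcd_pow_sub1_dvdn e : (gcd_pow_sub1 e %| n)%N.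
Proof. exact: dvdn_gcdr. Qed.

Lemma gcd_pow_sub1_gcdn e : gcd_pow_sub1 e = gcd_pow_sub1 (gcdn e (mord n r)).
Proof.
have dvd_pow d : (d %| n)%N ->
    (d %| `|r ^+ e - 1|)%N = (d %| `|r ^+ gcdn e (mord n r) - 1|)%N.
  move=> dn; have d_gt0 := dvdn_gt0 n_gt0 dn.
  rewrite -(dvdzE d%:Z) -(dvdzE d%:Z) -!mord_dvdn ?co_r_div //.
  by rewrite dvdn_gcd mord_dvd // andbT.
apply/eqP; rewrite eqn_dvd !dvdn_gcd !dvdn_gcdr !andbT.
by apply/andP; split; [rewrite -dvd_pow | rewrite dvd_pow]; rewrite ?dvdn_gcdl ?gcd_pow_sub1_dvdn.
Qed.

Lemma iter_aV_kappa (x : 'I_n) : iter (kappa n r t) (aV r t) x = x.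
Proof.
have := dvdnn (kappa n r t); rewrite kappa_dvdn // => /andP[n_pow n_sum].
by apply/eqP; rewrite iter_aV_fix // rpredD // dvdz_mulr.
Qed.

Lemma card_fix_iter_aV k :
  (\sum_(x : 'I_n) (iter k (aV r t) x == x))%N =
  (if kappa (gcd_pow_sub1 k) r t %| k then gcd_pow_sub1 k else 0)%N.
Proof.
under eq_bigr => x _ do rewrite iter_aV_fix //.
rewrite -(big_mkord xpredT (fun x => (n%:Z %| (r ^+ k - 1) * x%:Z + t * Ssum k r)%Z : nat)).
have G_gt0 := dvdn_gt0 n_gt0 (gcd_pow_sub1_dvdn k).
rewrite sum_dvdz_affine // -/(gcd_pow_sub1 k) kappa_dvdn ?co_r_div ?gcd_pow_sub1_dvdn //.
by have -> : ((gcd_pow_sub1 k)%:Z %| r ^+ k - 1)%Z by apply: dvdn_gcdl.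
Qed.

(* Square-freeness makes [n / d] coprime to [d], hence to [r - 1] as soon as
   [gcd(r^e - 1, n) = d]; this forces [n / d] to divide [S_L(r)]. *)
Lemma kappa_eq_lcmn d e : (d %| n)%N -> (kappa d r t %| e)%N -> gcd_pow_sub1 e = d ->
  kappa n r t = lcmn (kappa d r t) (mord n r).
Proof.
move=> dn kd_e Ge; have d_gt0 := dvdn_gt0 n_gt0 dn; have co_rd := co_r_div dn.
apply/eqP; rewrite eqn_dvd dvdn_lcm dvdn_kappa // mord_dvdn_kappa // andbT.
set L := lcmn _ _.
have n_powL : (n%:Z %| r ^+ L - 1)%Z by rewrite -mord_dvdn // dvdn_lcmr.
rewrite kappa_dvdn // n_powL /=.
set e' := (n %/ d)%N; have co_de' := squarefree_coprime_div n_gt0 sqf_n dn.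
have nE : n = (d * e')%N by rewrite mulnC divnK.
have e'n : (e' %| n)%N by rewrite nE dvdn_mull.
rewrite dvdzE nE Gauss_dvd // andbT; apply/andP; split.
  by have := dvdn_lcml (kappa d r t) (mord n r); rewrite kappa_dvdn // => /andP[_].
have co_e'r1 : coprime e' `|r - 1|.
  rewrite /coprime -dvdn1 -[X in (_ %| X)%N](eqP co_de').
  rewrite dvdn_gcd dvdn_gcdl andbT -Ge dvdn_gcd.
  rewrite -Ssum_geom abszM dvdn_mulr ?dvdn_gcdr //=.
  exact: dvdn_trans (dvdn_gcdl _ _) e'n.
rewrite abszM dvdn_mull // -(Gauss_dvdr _ co_e'r1) -abszM Ssum_geom.
exact: dvdn_trans e'n n_powL.
Qed.

Section KappaMultiples.
Variable d : nat.
Hypothesis dn : (d %| n)%N.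

Local Notation kd := (kappa d r t).
Local Notation g := (gcdn kd (mord n r)).
Local Notation M := (mord n r %/ g)%N.

Let d_gt0 : (0 < d)%N := dvdn_gt0 n_gt0 dn.
Let kd_gt0 : (0 < kd)%N := kappa_gt0 t d_gt0 (co_r_div dn).
Let g_gt0 : (0 < g)%N. Proof. by rewrite gcdn_gt0 kd_gt0. Qed.
Let M_gt0 : (0 < M)%N. Proof. by rewrite divn_gt0 // dvdn_leq // dvdn_gcdr. Qed.

Lemma gcd_pow_sub1_mul_kappa j : gcd_pow_sub1 (j * kd) = gcd_pow_sub1 (gcdn j M * kd).
Proof.
rewrite gcd_pow_sub1_gcdn [RHS]gcd_pow_sub1_gcdn !gcdn_mul_divgcd //.
by rewrite (gcdn_idPl (dvdn_gcdr j M)).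
Qed.

Lemma sum_kappa_multiples :
  (\sum_(0 <= k < kappa n r t | kd %| k) (gcd_pow_sub1 k == d))%N =
  (\sum_(l <- divisors M | gcd_pow_sub1 (l * kd) == d) totient (mord n r %/ (l * g)))%N.
Proof.
have [KE | KN] := eqVneq (kappa n r t) (kd * M)%N; last first.
  rewrite !big1_seq // => [l /andP[/eqP Gl _] | k /andP[kd_k _]]; last first.
    apply/eqP; rewrite eqb0; apply: contraNneq KN => Gk.
    by rewrite (kappa_eq_lcmn dn kd_k Gk) lcmn_div_gcd.
  by case/eqP: KN; rewrite (kappa_eq_lcmn dn (dvdn_mull l (dvdnn kd)) Gl) lcmn_div_gcd.
rewrite KE mulnC sum_nat_dvdn //.
under eq_bigr => j _ do rewrite gcd_pow_sub1_mul_kappa.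
transitivity (\sum_(0 <= j < M) \sum_(l <- divisors M)
                 ((gcdn j M == l) * (gcd_pow_sub1 (l * kd) == d)))%N.
  apply: eq_bigr => j _; rewrite (bigD1_seq (gcdn j M)) ?divisors_uniq //=; last first.
    by rewrite -dvdn_divisors ?dvdn_gcdr.
  by rewrite eqxx mul1n big1 ?addn0 // => l; rewrite eq_sym => /negbTE ->.
rewrite exchange_big [RHS]big_mkcond; apply: eq_big_seq => l; rewrite -dvdn_divisors // => lM.
rewrite -big_distrl /= sum_gcdn_eq_totient // -divnMA [(g * l)%N]mulnC.
by case: (_ == d); rewrite ?muln1 ?muln0.
Qed.

End KappaMultiples.

Lemma kappa_mul_cV :
  (kappa n r t * cV n r t)%N =
  (\sum_(d <- divisors n) d *
     \sum_(l <- divisors (mord n r %/ gcdn (kappa d r t) (mord n r))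
           | gcd_pow_sub1 (l * kappa d r t) == d)
       totient (mord n r %/ (l * gcdn (kappa d r t) (mord n r))))%N.
Proof.
rewrite /cV -(burnside_periodic kappa_n_gt0 iter_aV_kappa).
under eq_bigr => k _ do rewrite card_fix_iter_aV.
transitivity (\sum_(0 <= k < kappa n r t) \sum_(d <- divisors n)
    (if (gcd_pow_sub1 k == d) && (kappa d r t %| k) then d else 0))%N.
  apply: eq_bigr => k _; rewrite (bigD1_seq (gcd_pow_sub1 k)) ?divisors_uniq //=; last first.
    by rewrite -dvdn_divisors ?gcd_pow_sub1_dvdn.
  by rewrite eqxx big1 ?addn0 // => d; rewrite eq_sym => /negbTE ->.
rewrite exchange_big /=; apply: eq_big_seq => d; rewrite -dvdn_divisors // => dn.
rewrite -sum_kappa_multiples // big_distrr [RHS]big_mkcond /=; apply: eq_bigr => k _.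
by rewrite andbC; case: (_ %| k)%N; case: (_ == d); rewrite ?muln1 ?muln0.
Qed.

End CycleCount.

Unset Implicit Arguments.

Theorem lemma4p3 (n : nat) (r t : int) :
  (1 < n)%N -> squarefree n -> coprime `|r| n ->
  ((cV n r t)%:R : rat) =
  (\sum_(d <- divisors n)
     \sum_(l <- divisors (mord n r %/ gcdn (kappa d r t) (mord n r))%N
           | gcdn `|(r ^+ (l * kappa d r t)%N - 1)%R| n == d)
       ((d%:R / (kappa n r t)%:R) *
        (totient (mord n r %/ (l * gcdn (kappa d r t) (mord n r))))%N%:R))%R.
Proof.
move=> n_gt1 sqf_n co_rn.
have kappa_neq0 : ((kappa n r t)%:R : rat) != 0%R.
  by rewrite pnatr_eq0 -lt0n kappa_gt0 // ltnW.
rewrite -[LHS](mulKf kappa_neq0) -natrM kappa_mul_cV // natr_sum mulr_sumr.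
apply: eq_bigr => d _; rewrite natrM natr_sum !mulr_sumr; apply: eq_bigr => l _.
by rewrite mulrA (mulrC _^-1)%R.
Qed.
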